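(* There is an absolute constant $C>0$ such that the following holds. Let $\langle\mathcal X,\mathcal C,d,(x_1,\dots,x_n)\rangle$ be a facility location instance and $0<\epsilon<1$. Suppose the panel size $k\le n$ satisfies $k\ge C\log(1/\epsilon)$ and $$\mathbb P_{S\sim\mathcal U_{k,n}}\big[\textsc{Social-Cost}(\overline q(S))\le(1+\epsilon)\cdot\textsc{Social-Opt}\big]\ge1-\epsilon .$$ Then $\mathbb E_{S\sim\mathcal U_{k,n}}[\textsc{Social-Cost}(\overline q(S))]\le(1+5\epsilon)\cdot\textsc{Social-Opt}$.
   Context: A facility location instance consists of a metric space $(\mathcal X,d)$ with $d:\mathcal X\times\mathcal X\to[0,1]$, candidate locations $\mathcal C\subseteq\mathcal X$, and agent locations $x_1,\dots,x_n\in\mathcal X$. $\textsc{Social-Cost}(q)=\frac1n\sum_i d(q,x_i)$, $\textsc{Social-Opt}=\min_{q\in\mathcal C}\textsc{Social-Cost}(q)$; for a panel $S\subseteq[n]$ of size $k$, $\textsc{Panel-Cost}(q,S)=\frac1k\sum_{i\in S}d(q,x_i)$ and $\overline q(S)\in\arg\min_{q\in\mathcal C}\textsc{Panel-Cost}(q,S)$ (minimizers assumed to exist). $\mathcal U_{k,n}$ is the uniform distribution over size-$k$ subsets of $[n]$. *)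

From mathcomp Require Import all_boot all_order all_algebra.
From mathcomp Require Import all_classical all_reals all_analysis.
Set Implicit Arguments. Unset Strict Implicit. Unset Printing Implicit Defensive.
Import Order.TTheory GRing.Theory Num.Theory.
Local Open Scope ring_scope.

Definition is_metric01 (R : realType) (X : Type) (d : X -> X -> R) : Prop :=
  [/\ forall x y, 0 <= d x y /\ d x y <= 1,
      forall x y, d x y = 0 <-> x = y,
      forall x y, d x y = d y x &
      forall x y z, d x z <= d x y + d y z].

Definition social_cost (R : realType) (X : Type) (d : X -> X -> R) (n : nat)
  (x : 'I_n -> X) (q : X) : R :=
  (\sum_(i < n) d q (x i)) / n%:R.

Definition panel_cost (R : realType) (X : Type) (d : X -> X -> R) (n k : nat)
  (x : 'I_n -> X) (q : X) (S : {set 'I_n}) : R :=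
  (\sum_(i in S) d q (x i)) / k%:R.

Definition panels (n k : nat) : {set {set 'I_n}} := [set S : {set 'I_n} | #|S| == k].

Definition unif_prob (R : realType) (n k : nat) (E : {set 'I_n} -> bool) : R :=
  #|[set S in panels n k | E S]|%:R / #|panels n k|%:R.

Definition unif_exp (R : realType) (n k : nat) (f : {set 'I_n} -> R) : R :=
  (\sum_(S in panels n k) f S) / #|panels n k|%:R.

Arguments panel_cost {R X} d {n} k x q S.
Arguments unif_prob {R} n k E.
Arguments unif_exp {R} n k f.

From mathcomp Require Import all_boot all_order all_algebra.
From mathcomp Require Import all_classical all_reals all_analysis.
From mathcomp Require Import Rstruct Rstruct_topology.
From mathcomp Require Import ring lra.
From mathcomp Require Import finset.
Set Implicit Arguments.
Unset Strict Implicit.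
Unset Printing Implicit Defensive.
Import Order.TTheory GRing.Theory Num.Theory.
Local Open Scope ring_scope.

(* Write mu for Social-Cost(qopt) and D(S) for d(qbar S, qopt).  The triangle
   inequality gives Social-Cost(qbar S) <= mu + D(S), and since qbar S beats
   qopt on the panel, k D(S) <= 2 sum_{i in S} min(d(qopt, x_i), D(S)).
   Averaging over panels already yields the crude bound 3 mu.  For the sharp
   bound, a panel with D(S) > 3 mu satisfies
   D(S) <= 6 mu prod_{i in S} (1 + d(qopt, x_i) / (3 mu)) / 2^(k/2);
   by Maclaurin's inequality the product has expectation at most (4/3)^k, and
   (4/3)^k / 2^(k/2) decays exponentially.  So once k >= C log(1/eps) the bad
   panels cost at most eps mu in expectation, while the good ones, of
   probability at least 1 - eps, cost at most (1 + eps) mu each. *)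

Lemma amgm_pow (R : realFieldType) (m x : R) (j : nat) : 0 <= m -> 0 <= x ->
  j.+1%:R * m * x ^+ j <= m ^+ j.+1 + j%:R * x ^+ j.+1.
Proof.
move=> m0 x0; elim: j => [|j IH]; first by rewrite !expr0 expr1 mul1r mulr1 mul0r addr0.
have same_sign : 0 <= (m ^+ j.+1 - x ^+ j.+1) * (m - x).
  have [xm|mx] := leP x m.
    by apply: mulr_ge0; rewrite subr_ge0 // lerXn2r // nnegrE.
  by apply: mulr_le0; rewrite subr_le0 // ?lerXn2r ?nnegrE // ltW.
have IHx := ler_wpM2r x0 IH.
rewrite !exprS -!natr1 in IHx same_sign *.
nra.
Qed.

Lemma maclaurin_step (R : realFieldType) (N j : nat) (x m : R) : 0 <= x -> 0 <= m ->
  'C(N, j)%:R * ((N.+1%:R * m - N%:R * x) * x ^+ j) + 'C(N, j.+1)%:R * x ^+ j.+1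
  <= 'C(N.+1, j.+1)%:R * m ^+ j.+1.
Proof.
move=> x0 m0.
have j1_gt0 : (0 : R) < j.+1%:R by rewrite ltr0n.
rewrite -(ler_pM2l j1_gt0) mulrDr !mulrA.
rewrite -!natrM mul_bin_left -mul_bin_diag !natrM.
have [jN|Nj] := leqP j N; last first.
  by rewrite bin_small // !(mulr0, mul0r, add0r, addr0).
have Cj_ge0 : (0 : R) <= 'C(N, j)%:R by rewrite ler0n.
have N1_ge0 : (0 : R) <= N.+1%:R by rewrite ler0n.
have := ler_wpM2l (mulr_ge0 N1_ge0 Cj_ge0) (amgm_pow j m0 x0).
by rewrite natrB // -!natr1 !exprS; nra.
Qed.

Section ElementarySymmetric.
Variables (R : realFieldType) (T : finType).

Definition esym (w : T -> R) (A : {set T}) (k : nat) : R :=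
  \sum_(S : {set T} | (S \subset A) && (#|S| == k)) \prod_(i in S) w i.

Lemma sum_subsets_notin (F : {set T} -> R) (A : {set T}) a k :
  \sum_(S : {set T} | (S \subset A) && (#|S| == k) && (a \notin S)) F S
  = \sum_(S : {set T} | (S \subset A :\ a) && (#|S| == k)) F S.
Proof.
apply: eq_bigl => S; rewrite subsetD1.
by case: (S \subset A); case: (a \in S); rewrite ?andbF ?andbT.
Qed.

Lemma sum_subsets_in (F : {set T} -> R) (A : {set T}) a k : a \in A ->
  \sum_(S : {set T} | (S \subset A) && (#|S| == k.+1) && (a \in S)) F S
  = \sum_(S : {set T} | (S \subset A :\ a) && (#|S| == k)) F (a |: S).
Proof.
move=> aA; rewrite (reindex_onto (fun S => a |: S) (fun S => S :\ a)); last first.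
  by move=> S /andP [_ aS]; rewrite setD1K.
apply: eq_bigl => S; rewrite subsetD1.
have [aS|naS] := boolP (a \in S).
  rewrite /= andbF /=; apply/negP => /andP [_ /eqP E].
  by move: aS; rewrite -E !inE eqxx.
rewrite setU1K // eqxx andbT setU11 andbT cardsU1 naS add1n eqSS /= andbT.
by rewrite subUset sub1set aA.
Qed.

Lemma esym0 w A : esym w A 0 = 1.
Proof.
rewrite /esym (bigD1 set0) /=; last by rewrite sub0set cards0.
rewrite big_set0 big1 ?addr0 // => S /andP [/andP [_ /eqP /cards0_eq ->]].
by rewrite eqxx.
Qed.

Lemma esym_set0 w k : esym w set0 k.+1 = 0.
Proof.
by rewrite /esym big1 // => S /andP []; rewrite subset0 => /eqP ->; rewrite cards0.
Qed.

Lemma esym_setD1 w (A : {set T}) a k : a \in A ->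
  esym w A k.+1 = w a * esym w (A :\ a) k + esym w (A :\ a) k.+1.
Proof.
move=> aA; rewrite /esym (bigID (fun S : {set T} => a \in S)) /=.
rewrite sum_subsets_in // sum_subsets_notin.
congr (_ + _); rewrite mulr_sumr; apply: eq_bigr => S /andP [].
by rewrite subsetD1 => /andP [_ naS] _; rewrite big_setU1.
Qed.

(* A weak form of Maclaurin's inequality. *)
Lemma esym_le_mean w (A : {set T}) k : (forall i, 0 <= w i) ->
  esym w A k <= 'C(#|A|, k)%:R * ((\sum_(i in A) w i) / #|A|%:R) ^+ k.
Proof.
move=> w_ge0; have [N cA] : {N | #|A| = N} by exists #|A|.
rewrite cA; elim: N A cA k => [|N IH] A cA [|k]; rewrite ?esym0 ?bin0 ?expr0 ?mulr1 //.
  rewrite (cards0_eq cA) esym_set0; apply: mulr_ge0 => //.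
  by rewrite exprn_ge0 // divr_ge0 // sumr_ge0.
have [a aA] : {a | a \in A}.
  by apply/sigW/set0Pn; rewrite -card_gt0 cA.
have cA' : #|A :\ a| = N by move: cA; rewrite (cardsD1 a) aA add1n => -[].
rewrite (esym_setD1 w k aA) (big_setD1 a aA) /=.
set s := \sum_(i in A :\ a) w i; set x := s / N%:R; set m := (w a + s) / N.+1%:R.
have x_ge0 : 0 <= x by rewrite divr_ge0 // sumr_ge0.
have m_ge0 : 0 <= m by rewrite divr_ge0 // addr_ge0 // sumr_ge0.
have s_eq : s = N%:R * x.
  have [N0|N_gt0] := eqVneq N 0%N; last by rewrite /x mulrC divfK // pnatr_eq0.
  by rewrite /s (cards0_eq (etrans cA' N0)) big_set0 N0 mul0r.
have wa_eq : w a = N.+1%:R * m - N%:R * x by rewrite /m mulrC divfK // -s_eq addrK.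
apply: le_trans (maclaurin_step N k x_ge0 m_ge0); rewrite -wa_eq mulrCA.
by apply: lerD; [apply: ler_wpM2l |]; rewrite ?w_ge0 //; apply: IH.
Qed.

End ElementarySymmetric.

Section UniformPanel.
Variables (R : realType) (n k : nat).

Lemma card_panels : #|panels n k| = 'C(n, k).
Proof. by rewrite /panels card_draws card_ord. Qed.

Lemma ler_unif_exp (f g : {set 'I_n} -> R) :
  (forall S, S \in panels n k -> f S <= g S) -> unif_exp n k f <= unif_exp n k g.
Proof. by move=> fg; rewrite ler_wpM2r ?invr_ge0 // ler_sum. Qed.

Lemma unif_expD (f g : {set 'I_n} -> R) :
  unif_exp n k (fun S => f S + g S) = unif_exp n k f + unif_exp n k g.
Proof. by rewrite /unif_exp big_split mulrDl. Qed.

Lemma unif_expZ c (f : {set 'I_n} -> R) :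
  unif_exp n k (fun S => c * f S) = c * unif_exp n k f.
Proof. by rewrite /unif_exp -mulr_sumr mulrA. Qed.

Lemma unif_exp_indicator (E : {set 'I_n} -> bool) :
  unif_exp n k (fun S => (E S)%:R) = @unif_prob R n k E.
Proof.
rewrite /unif_exp /unif_prob; congr (_ / _).
rewrite -sum1_card natr_sum big_mkcond [RHS]big_mkcond /=.
by apply: eq_bigr => S _; rewrite !inE; case: (E S); rewrite ?andbT ?andbF; case: ifP.
Qed.

Lemma sum_panels_mem (i : 'I_n) j :
  \sum_(S in panels n j.+1 | i \in S) 1 = 'C(n.-1, j)%:R :> R.
Proof.
rewrite (eq_bigl (fun S : {set 'I_n} => (S \subset setT) && (#|S| == j.+1) && (i \in S))); last first.
  by move=> S; rewrite inE subsetT.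
rewrite sum_subsets_in ?inE //.
rewrite (eq_bigl (mem [set S : {set 'I_n} | S \subset [set: 'I_n] :\ i & #|S| == j])); last first.
  by move=> S; rewrite !inE.
by rewrite sumr_const cards_draws setTD cardsC1 card_ord.
Qed.

Hypothesis k_le_n : (k <= n)%N.

Let panels_gt0 : (0 : R) < #|panels n k|%:R.
Proof. by rewrite card_panels ltr0n bin_gt0. Qed.

Lemma unif_exp_cst (c : R) : unif_exp n k (fun=> c) = c.
Proof. by rewrite /unif_exp sumr_const -[c *+ _]mulr_natr mulfK // gt_eqF. Qed.

Lemma unif_exp_sum_mem (f : 'I_n -> R) :
  unif_exp n k (fun S => \sum_(i in S) f i) = k%:R / n%:R * \sum_i f i.
Proof.
have [k0|k_gt0] := posnP k.
  rewrite /unif_exp k0 big1 ?mul0r // => S; rewrite inE => /eqP/cards0_eq ->.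
  by rewrite big_set0.
rewrite /unif_exp (exchange_big_dep xpredT) //= mulr_sumr mulr_suml; apply: eq_bigr => i _.
rewrite -[in LHS](mulr1 (f i)) -mulr_sumr -(prednK k_gt0) sum_panels_mem prednK //.
have n_gt0 : (0 : R) < n%:R by rewrite ltr0n (leq_trans k_gt0).
have := congr1 (fun m => m%:R : R) (mul_bin_diag n k.-1).
rewrite prednK // !natrM => bin_eq.
apply: (mulfI (lt0r_neq0 n_gt0)); move: panels_gt0; rewrite card_panels => C_gt0.
by rewrite [f i * _]mulrC !mulrA bin_eq; field; rewrite !gt_eqF.
Qed.

Lemma unif_exp_prod_le (w : 'I_n -> R) : (forall i, 0 <= w i) ->
  unif_exp n k (fun S => \prod_(i in S) w i) <= ((\sum_i w i) / n%:R) ^+ k.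
Proof.
move=> w_ge0; have := esym_le_mean [set: 'I_n] k w_ge0.
have -> : esym w [set: 'I_n] k = \sum_(S in panels n k) \prod_(i in S) w i.
  by apply: eq_bigl => S; rewrite /panels !inE subsetT.
have -> : \sum_(i in [set: 'I_n]) w i = \sum_i w i by apply: eq_bigl => i; rewrite inE.
by rewrite cardsT card_ord /unif_exp ler_pdivrMr // card_panels mulrC.
Qed.

End UniformPanel.

Lemma expR_mul_ln1D_le (R : realType) (u y : R) : 0 <= u -> 0 <= y <= 1 ->
  expR (y * ln (1 + u)) <= 1 + u * y.
Proof.
move=> u_ge0 /andP [y_ge0 y_le1].
have := @concave_ln R (Itv01 y_ge0 y_le1) (1 + u) 1.
rewrite !convRE /= ln1 mulr0 addr0.
have -> : y * (1 + u) + (1 - y) * 1 = 1 + u * y by ring.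
have uy_pos : 0 < 1 + u * y by rewrite ltr_pwDl // mulr_ge0.
by move=> concave; rewrite -[_ + u * y]lnK ?posrE // ler_expR concave //; lra.
Qed.

(* The weights [min (a i) D / D] lie in [0, 1] and sum to at least [#|S| / 2];
   by concavity of [ln], each factor is at least [(1 + D / (3 mu))] raised to
   its weight, and [1 + D / (3 mu)] exceeds 2. *)
Lemma dist_le_prod (R : realType) (I : finType) (S : {set I}) (a : I -> R) (mu D : R) :
  (forall i, 0 <= a i) -> 0 < mu -> 3 * mu < D -> (2 <= #|S|)%N ->
  #|S|%:R * D <= 2 * \sum_(i in S) Num.min (a i) D ->
  D <= 6 * mu * (\prod_(i in S) (1 + a i / (3 * mu))) / expR (#|S|%:R / 2 * ln 2).
Proof.
move=> a_ge0 mu_gt0 D_gt3mu S_ge2 avg_min.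
have D_gt0 : 0 < D by lra.
set k := #|S|%:R in avg_min *; set u := D / (3 * mu); set L := ln (1 + u).
set y := fun i => Num.min (a i) D / D.
have u_gt1 : 1 < u by rewrite /u ltr_pdivlMr; lra.
have L_ge_ln2 : ln 2 <= L by rewrite /L ler_ln ?posrE; lra.
have y_sum : k / 2 <= \sum_(i in S) y i.
  by rewrite /y -mulr_suml ler_pdivlMr // mulrAC ler_pdivrMr //; lra.
have factor_le i : expR (y i * L) <= 1 + a i / (3 * mu).
  have min_ge0 : 0 <= Num.min (a i) D by rewrite le_min a_ge0 ltW.
  have y_01 : 0 <= y i <= 1.
    by rewrite /y divr_ge0 ?(ltW D_gt0) //= ler_pdivrMr // mul1r ge_min lexx orbT.
  apply: le_trans (expR_mul_ln1D_le (ltW (lt_trans ltr01 u_gt1)) y_01) _.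
  have -> : u * y i = Num.min (a i) D / (3 * mu).
    by rewrite /u /y; field; rewrite !gt_eqF //; lra.
  by rewrite lerD2l ler_pM2r ?invr_gt0 ?ge_min ?lexx //; lra.
have prod_ge : expR (k / 2 * ln 2) * ((1 + u) / 2) <= \prod_(i in S) (1 + a i / (3 * mu)).
  apply: le_trans (_ : \prod_(i in S) expR (y i * L) <= _); last first.
    by apply: ler_prod => i _; rewrite expR_ge0 factor_le.
  rewrite -expR_sum -[X in _ * X]lnK ?posrE; last lra.
  rewrite -exp.expRD ler_expR ln_div ?posrE; try lra.
  have k_ge2 : (2 : R) <= k by rewrite ler_nat.
  have L_ge0 : 0 <= L by apply: le_trans L_ge_ln2; rewrite ln_ge0 //; lra.
  rewrite -mulr_suml -/L.
  have : 0 <= (k / 2 - 1) * (L - ln 2) by apply: mulr_ge0; lra.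
  have := ler_wpM2r L_ge0 y_sum; lra.
have E_gt0 : 0 < expR (k / 2 * ln 2) by apply: expR_gt0.
rewrite ler_pdivlMr // (_ : D = 3 * mu * u); last by rewrite /u; field; rewrite gt_eqF.
nra.
Qed.

Definition decay_rate (R : realType) : R := ln 2 / 2 - ln (4 / 3).

Lemma decay_rate_gt0 (R : realType) : 0 < decay_rate R.
Proof.
have : ln ((4 / 3) ^+ 2) < ln (2 : R) by rewrite ltr_ln ?posrE ?expr2; lra.
by rewrite lnXn ?mulr2n /decay_rate; lra.
Qed.

Lemma decay_rate_lt_ln2 (R : realType) : decay_rate R < ln 2.
Proof.
have : 0 < ln (4 / 3 : R) by apply: ln_gt0; lra.
have : 0 < ln (2 : R) by apply: ln_gt0; lra.
rewrite /decay_rate; lra.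
Qed.

Lemma expR_decay_rate (R : realType) (k : nat) :
  (4 / 3 : R) ^+ k / expR (k%:R / 2 * ln 2) = expR (- (k%:R * decay_rate R)).
Proof.
rewrite -[4 / 3 : R]lnK ?posrE; last lra.
by rewrite -expRM_natl -expRB /decay_rate; congr expR; ring.
Qed.

Lemma panel_size_ge2 (R : realType) (k : nat) (eps : R) : 0 < eps < 1 / 2 ->
  3 * ln (1 / eps) <= k%:R * decay_rate R -> (2 <= k)%N.
Proof.
move=> /andP [eps_gt0 eps_lt] k_ge.
have r_gt0 := decay_rate_gt0 R; have r_lt := decay_rate_lt_ln2 R.
have ln_lt : ln 2 < ln (1 / eps) by rewrite ltr_ln ?posrE ?ltr_pdivlMr //; lra.
have : 3 * decay_rate R < k%:R * decay_rate R by lra.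
by rewrite ltr_pM2r // -(ler_nat R) => k_gt3; lra.
Qed.

Lemma expR_decay_le (R : realType) (k : nat) (eps : R) : 0 < eps <= 2 / 5 ->
  3 * ln (1 / eps) <= k%:R * decay_rate R -> 6 * expR (- (k%:R * decay_rate R)) <= eps.
Proof.
move=> /andP [eps_gt0 eps_le] k_ge.
have : expR (- (k%:R * decay_rate R)) <= eps ^+ 3.
  rewrite -[eps in eps ^+ 3]lnK ?posrE // -expRM_natl ler_expR.
  by move: k_ge; rewrite div1r lnV ?posrE //; lra.
have : eps ^+ 3 * 6 <= eps by rewrite !exprS expr0 mulr1; nra.
lra.
Qed.

Section PanelSelection.
Variables (R : realType) (X : Type) (d : X -> X -> R) (n k : nat) (x : 'I_n -> X).
Hypotheses (d_ge0 : forall p q, 0 <= d p q) (d_sym : forall p q, d p q = d q p)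
  (d_triangle : forall p q r, d p r <= d p q + d q r).

Lemma social_cost_ge0 q : 0 <= social_cost d x q.
Proof. by rewrite divr_ge0 ?sumr_ge0. Qed.

Lemma social_cost_le_dist p q : social_cost d x q <= social_cost d x p + d q p.
Proof.
apply: le_trans (_ : (\sum_i (d q p + d p (x i))) / n%:R <= _).
  by rewrite ler_wpM2r ?invr_ge0 // ler_sum.
rewrite big_split sumr_const card_ord /= mulrDl addrC lerD2l -[d q p *+ _]mulr_natr.
have [->|n_gt0] := posnP n; first by rewrite mulr0 mul0r.
by rewrite mulfK // pnatr_eq0 -lt0n.
Qed.

Lemma dist_le_panel_min (S : {set 'I_n}) p q :
  \sum_(i in S) d q (x i) <= \sum_(i in S) d p (x i) ->
  #|S|%:R * d q p <= 2 * \sum_(i in S) Num.min (d p (x i)) (d q p).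
Proof.
have pointwise i : d q p + d p (x i) - 2 * Num.min (d p (x i)) (d q p) <= d q (x i).
  have := d_triangle q (x i) p; have := d_triangle p q (x i).
  rewrite (d_sym p q) (d_sym (x i) p).
  by have [] := leP (d p (x i)) (d q p); lra.
have : \sum_(i in S) (d q p + d p (x i) - 2 * Num.min (d p (x i)) (d q p))
       <= \sum_(i in S) d q (x i) by apply: ler_sum => i _; apply: pointwise.
by rewrite sumrB big_split /= sumr_const -mulr_sumr -[d q p *+ _]mulr_natl; lra.
Qed.

Variables (qopt : X) (qbar : {set 'I_n} -> X).
Hypothesis qbar_opt : forall S, S \in panels n k ->
  panel_cost d k x (qbar S) S <= panel_cost d k x qopt S.
Hypotheses (k_gt0 : (0 < k)%N) (k_le_n : (k <= n)%N).

Let mu := social_cost d x qopt.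
Let a i := d qopt (x i).
Let good eps S := social_cost d x (qbar S) <= (1 + eps) * mu.
Let P (S : {set 'I_n}) := \prod_(i in S) (1 + a i / (3 * mu)).

Let n_gt0 : (0 : R) < n%:R. Proof. by rewrite ltr0n (leq_trans k_gt0). Qed.

Let sum_a : \sum_i a i = n%:R * mu.
Proof. by rewrite /mu /social_cost mulrC divfK // gt_eqF. Qed.

Lemma dist_qbar_le S : S \in panels n k ->
  k%:R * d (qbar S) qopt <= 2 * \sum_(i in S) Num.min (a i) (d (qbar S) qopt).
Proof.
move=> SP; have := qbar_opt SP; rewrite /panel_cost ler_pM2r ?invr_gt0 ?ltr0n //.
by move: SP; rewrite inE => /eqP <-; apply: dist_le_panel_min.
Qed.

Lemma unif_exp_social_cost_le3 :
  unif_exp n k (fun S => social_cost d x (qbar S)) <= 3 * mu.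
Proof.
apply: le_trans (_ : unif_exp n k (fun S => mu + 2 / k%:R * \sum_(i in S) a i) <= _).
  apply: ler_unif_exp => S SP; apply: le_trans (social_cost_le_dist qopt _) _.
  rewrite lerD2l mulrAC ler_pdivlMr ?ltr0n // mulrC.
  apply: le_trans (dist_qbar_le SP) _; rewrite ler_pM2l // ler_sum // => i _.
  by rewrite ge_min lexx.
rewrite unif_expD unif_exp_cst // unif_expZ unif_exp_sum_mem // sum_a.
have kR_gt0 : (0 : R) < k%:R by rewrite ltr0n.
have -> : 2 / k%:R * (k%:R / n%:R * (n%:R * mu)) = 2 * mu.
  by field; rewrite !gt_eqF.
lra.
Qed.

Lemma social_cost_qbar_le eps : (2 <= k)%N -> 0 < mu -> forall S, S \in panels n k ->
  social_cost d x (qbar S) <=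
    4 * mu + (eps - 3) * mu * (good eps S)%:R
    + 6 * mu / expR (k%:R / 2 * ln 2) * P S.
Proof.
move=> k_ge2 mu_gt0 S SP.
have P_ge0 : 0 <= P S.
  by apply: prodr_ge0 => i _; rewrite /a addr_ge0 ?divr_ge0 ?d_ge0 //; lra.
have tail_ge0 : 0 <= 6 * mu / expR (k%:R / 2 * ln 2) * P S.
  by rewrite mulr_ge0 // divr_ge0 ?expR_ge0 //; lra.
have := social_cost_le_dist qopt (qbar S); rewrite -/mu => sc_le.
have [good_S|_] /= := boolP (good eps S).
  by rewrite mulr1; move: good_S; rewrite /good; lra.
rewrite mulr0 addr0.
have [near|far] := leP (d (qbar S) qopt) (3 * mu); first lra.
have cardS : #|S| = k by move: SP; rewrite inE => /eqP.
have := @dist_le_prod R _ S a mu _ (fun i => d_ge0 _ _) mu_gt0 far.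
by rewrite cardS [6 * mu * _ / _]mulrAC -/(P S) => /(_ k_ge2 (dist_qbar_le SP)); lra.
Qed.

Lemma unif_exp_prod_le_4_3 : 0 < mu -> unif_exp n k P <= (4 / 3) ^+ k.
Proof.
move=> mu_gt0; apply: le_trans (unif_exp_prod_le k_le_n _) _ => [i|].
  by rewrite /a addr_ge0 ?divr_ge0 ?d_ge0 //; lra.
rewrite big_split sumr_const card_ord -mulr_suml sum_a /=.
suff -> : (n%:R + n%:R * mu / (3 * mu)) / n%:R = 4 / 3 :> R by [].
by field; rewrite !gt_eqF.
Qed.

Lemma unif_exp_social_cost_le eps : (2 <= k)%N -> 0 <= eps <= 1 ->
  1 - eps <= unif_prob n k (good eps) ->
  6 * expR (- (k%:R * decay_rate R)) <= eps ->
  unif_exp n k (fun S => social_cost d x (qbar S)) <= (1 + 5 * eps) * mu.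
Proof.
move=> k_ge2 /andP [eps_ge0 eps_le1] prob_good decay_le.
have /orP [/eqP mu0|mu_gt0] : (0 == mu) || (0 < mu) by rewrite -le_eqVlt social_cost_ge0.
  by apply: le_trans unif_exp_social_cost_le3 _; rewrite -mu0 !mulr0.
apply: le_trans (ler_unif_exp (social_cost_qbar_le eps k_ge2 mu_gt0)) _.
rewrite !unif_expD unif_exp_cst // !unif_expZ unif_exp_indicator.
set E := expR (k%:R / 2 * ln 2).
have E_gt0 : 0 < E by apply: expR_gt0.
have tail_le : 6 * mu / E * unif_exp n k P <= eps * mu.
  apply: le_trans (_ : 6 * mu / E * (4 / 3) ^+ k <= _).
    by rewrite ler_wpM2l ?unif_exp_prod_le_4_3 // divr_ge0 //; lra.
  rewrite -mulrA (mulrC _ ((4 / 3) ^+ k)) expR_decay_rate mulrAC.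
  by rewrite ler_pM2r.
have prob_term : (eps - 3) * mu * unif_prob n k (good eps) <= (eps - 3) * mu * (1 - eps).
  by apply: ler_wnM2l => //; rewrite pmulr_lle0 //; lra.
have := mulr_ge0 (mulr_ge0 eps_ge0 eps_ge0) (ltW mu_gt0).
lra.
Qed.

End PanelSelection.

Theorem corollary4p3 :
  exists C : Rdefinitions.R, 0 < C /\
  forall (X : Type) (d : X -> X -> Rdefinitions.R) (Cand : X -> Prop) (n : nat)
    (x : 'I_n -> X) (k : nat) (eps : Rdefinitions.R)
    (qopt : X) (qbar : {set 'I_n} -> X),
    is_metric01 d ->
    (* qopt attains Social-Opt = min_{q in Cand} Social-Cost(q) *)
    Cand qopt ->
    (forall q, Cand q -> social_cost d x qopt <= social_cost d x q) ->
    (* qbar S is a minimizer of the panel cost over Cand, for each panel S *)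
    (forall S, S \in panels n k ->
       Cand (qbar S) /\
       forall q, Cand q -> panel_cost d k x (qbar S) S <= panel_cost d k x q S) ->
    0 < eps -> eps < 1 ->
    (k <= n)%N ->
    C * ln (1 / eps) <= k%:R ->
    1 - eps <= unif_prob n k
                 (fun S => social_cost d x (qbar S) <= (1 + eps) * social_cost d x qopt) ->
    unif_exp n k (fun S => social_cost d x (qbar S))
      <= (1 + 5 * eps) * social_cost d x qopt.
Proof.
have rate_gt0 := decay_rate_gt0 Rdefinitions.R.
exists (3 / decay_rate _); split; first by rewrite divr_gt0.
move=> X d Cand n x k eps qopt qbar [d01 _ d_sym d_triangle] qopt_cand _ qbar_min.
move=> eps_gt0 eps_lt1 k_le_n k_large prob_good.
have d_ge0 p q : 0 <= d p q by case: (d01 p q).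
have qbar_opt S : S \in panels n k -> panel_cost d k x (qbar S) S <= panel_cost d k x qopt S.
  by move=> /qbar_min [_ /(_ qopt qopt_cand)].
have ln_gt0 : 0 < ln (1 / eps) by rewrite ln_gt0 // ltr_pdivlMr // mul1r.
have {}k_large : 3 * ln (1 / eps) <= k%:R * decay_rate _.
  by move: k_large; rewrite mulrAC ler_pdivrMr.
have k_gt0 : (0 < k)%N.
  have : 0 < k%:R * decay_rate Rdefinitions.R by apply: lt_le_trans k_large; lra.
  by rewrite pmulr_lgt0 // ltr0n.
have mu_ge0 := social_cost_ge0 x d_ge0 qopt.
have [eps_large|eps_small] := leP (2 / 5) eps.
  have := unif_exp_social_cost_le3 d_ge0 d_sym d_triangle qbar_opt k_gt0 k_le_n.
  by move/le_trans; apply; nra.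
apply: unif_exp_social_cost_le prob_good _ => //.
- by apply: (panel_size_ge2 _ k_large); rewrite eps_gt0 /=; lra.
- by rewrite !ltW.
- by apply: (expR_decay_le _ k_large); rewrite eps_gt0 ltW.
Qed.
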